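(* (i) Let $A$ be a $3\times m$ matrix with entries in $\{0,1,-1\}$ and let $B\in\mathcal{Q}_0(A^t)$. Then $(AB)^{[2]}$ is a $P_0$-matrix, and no nonreal eigenvalue of $AB$ lies in the open left half-plane $\mathbb{C}_-$. (ii) Let $A$ be an $m\times 3$ matrix with entries in $\{0,1,-1\}$ and let $B\in\mathcal{Q}_0(A^t)$. Then no nonreal eigenvalue of $AB$ lies in $\mathbb{C}_-$.
   Context: For $M\in\mathbb{R}^{n\times m}$, $\mathcal{Q}(M)$ is the set of real matrices with the same entrywise sign pattern as $M$, and $\mathcal{Q}_0(M)$ its closure. A square real matrix is a $P_0$-matrix if all principal minors are nonnegative. $M^{[2]}$ denotes the second additive compound of a square matrix $M\in\mathbb{R}^{n\times n}$: the matrix of $u\wedge v\mapsto Mu\wedge v+u\wedge Mv$ on $\Lambda^2\mathbb{R}^n$ in the lexicographically ordered basis $e_i\wedge e_j$, $i<j$. *)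

From HB Require Import structures.
From mathcomp Require Import all_boot all_order all_algebra.
From mathcomp Require Import complex.
From mathcomp Require Import Rstruct.
From Stdlib Require Rdefinitions.
Notation R := Rdefinitions.R.
Set Implicit Arguments. Unset Strict Implicit. Unset Printing Implicit Defensive.
Import Order.TTheory GRing.Theory Num.Theory.
Local Open Scope ring_scope.

(* Closure Q_0(M) of the sign-pattern class Q(M): entrywise, the sign of B i j
   is either 0 or the sign of M i j. *)
Definition in_Q0 (n m : nat) (M B : 'M[R]_(n, m)) : Prop :=
  forall i j, Num.sg (B i j) \in [:: 0; Num.sg (M i j)].

Definition entries_01m (n m : nat) (A : 'M[R]_(n, m)) : Prop :=
  forall i j, A i j \in [:: 0; 1; -1].

Definition principal_minor (n : nat) (M : 'M[R]_n) (S : {set 'I_n}) : R :=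
  \det (\matrix_(i < #|S|, j < #|S|) M (enum_val i) (enum_val j)).

Definition P0_matrix (n : nat) (M : 'M[R]_n) : Prop :=
  forall S : {set 'I_n}, 0 <= principal_minor M S.

(* Index set of the basis e_i /\ e_j, i < j, of Lambda^2 R^n. Its enumeration
   (enum of a subtype of a product of ordinals) is lexicographic. *)
Definition wedge_idx (n : nat) := {p : 'I_n * 'I_n | (val p.1 < val p.2)%N}.

(* Second additive compound: the matrix of u/\v |-> Mu/\v + u/\Mv in the
   basis (e_i /\ e_j)_{i<j}, lexicographically ordered.  The entry in row
   (k,l) and column (i,j) is the coefficient of e_k/\e_l in
   M e_i /\ e_j + e_i /\ M e_j. *)
Definition compound2_entry (n : nat) (M : 'M[R]_n) (r c : wedge_idx n) : R :=
  let: (k, l) := val r in let: (i, j) := val c in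
  (j == l)%:R * M k i - (j == k)%:R * M l i
  + (i == k)%:R * M l j - (i == l)%:R * M k j.

Definition compound2 (n : nat) (M : 'M[R]_n) : 'M[R]_(#|{: wedge_idx n}|) :=
  \matrix_(r, c) compound2_entry M (enum_val r) (enum_val c).

Definition eigenvalueC (n : nat) (M : 'M[R]_n) (z : R[i]) : bool :=
  root (char_poly (map_mx (fun x : R => x%:C)%C M)) z.

Definition nonreal_in_open_LHP (z : R[i]) : bool :=
  (complex.Im z != 0) && (complex.Re z < 0).

(* For A with entries in {0, 1, -1} and B in Q_0(A^t), every term A_ik B_kj
   of (AB)_ij is bounded in absolute value by A_jk B_kj = |B_kj|, hence
   |(AB)_ij| <= (AB)_jj.  For a 3 x 3 matrix M with this property the second
   additive compound is weakly diagonally dominant by columns, and so are its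
   principal submatrices; such a matrix has nonnegative determinant, because
   the Schur complement of a positive pivot is again dominant.  Writing
   char M = X^3 - tX^2 + sX - d, the determinant of the compound is st - d,
   whereas a nonreal root a + ib with a < 0 forces st - d = 2a(b^2 + (t-a)^2),
   which is negative.  For A of size m x 3, the nonzero eigenvalues of AB are
   those of BA = (A^t B^t)^t, to which the first case applies. *)
From HB Require Import structures.
From mathcomp Require Import all_boot all_order all_algebra.
From mathcomp Require Import complex.
From mathcomp Require Import Rstruct.
From mathcomp Require Import ring lra zify.
Import Order.TTheory GRing.Theory Num.Theory.
Local Open Scope ring_scope.
Local Open Scope complex_scope.
Set Implicit Arguments. Unset Strict Implicit. Unset Printing Implicit Defensive.

Section ColumnDominance.
Variable F : realFieldType.

Definition col_dominant n (M : 'M[F]_n) :=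
  forall j, \sum_(i | i != j) `|M i j| <= M j j.

Definition col_entry_dominant n (M : 'M[F]_n) := forall i j, `|M i j| <= M j j.

Lemma ler_sum_inj (I J : finType) (f : I -> J) (P : pred I) (Q : pred J)
    (G : J -> F) :
  injective f -> (forall i, P i -> Q (f i)) -> (forall k, 0 <= G k) ->
  \sum_(i | P i) G (f i) <= \sum_(k | Q k) G k.
Proof.
move=> f_inj PQ G_ge0; rewrite -(big_imset _ (in2W f_inj)) /=.
rewrite [X in _ <= X](bigID (mem (f @: P))) /=.
have -> : \sum_(k | Q k && (k \in f @: P)) G k = \sum_(k in f @: P) G k.
  apply: eq_bigl => k; apply: andb_idl => /imsetP[i Pi ->]; exact: PQ.
by rewrite lerDl sumr_ge0.
Qed.

Lemma col_dominant_submx p n (f : 'I_p -> 'I_n) (M : 'M[F]_n) :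
  injective f -> col_dominant M -> col_dominant (\matrix_(i, j) M (f i) (f j)).
Proof.
move=> f_inj dM j; rewrite mxE; apply: le_trans (dM (f j)).
under eq_bigr do rewrite mxE.
apply: ler_sum_inj => // i; exact: contra_neq (@f_inj _ _).
Qed.

Section Block.
Variables (n : nat) (a : F) (u : 'M[F]_(1, n)) (v : 'M[F]_(n, 1)) (D : 'M[F]_n).

Lemma det_block_schur : a != 0 ->
  \det (block_mx a%:M u v D) = a * \det (D - a^-1 *: (v *m u)).
Proof.
move=> a0.
have -> : block_mx a%:M u v D =
    block_mx 1%:M 0 (a^-1 *: v) 1%:M *m block_mx a%:M u 0 (D - a^-1 *: (v *m u)).
  rewrite mulmx_block !mul1mx !mul0mx !addr0 -scalemxAl mul_mx_scalar.
  by rewrite scalerA mulVf // scale1r -scalemxAl addrC subrK.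
by rewrite det_mulmx det_lblock det_ublock !det1 det_scalar1 !mul1r.
Qed.

Lemma col_dominant_block : col_dominant (block_mx a%:M u v D) ->
  \sum_i `|v i 0| <= a /\ forall j, `|u 0 j| + \sum_(i | i != j) `|D i j| <= D j j.
Proof.
move=> dM; split.
  have := dM (lshift n 0); rewrite big_split_ord /= big_pred0 => [|i]; last first.
    by rewrite eq_lshift ord1 eqxx.
  under eq_bigr do rewrite block_mxEdl.
  by rewrite block_mxEul mxE eqxx mulr1n add0r.
move=> j; have := dM (rshift 1 j); rewrite big_split_ord /=.
rewrite (eq_bigl xpredT) => [|i]; last by rewrite eq_lrshift.
rewrite big_ord1 (eq_bigl (fun i => i != j)) => [|i]; last by rewrite eq_rshift.
under eq_bigr do rewrite block_mxEdr.
by rewrite block_mxEur block_mxEdr.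
Qed.

Lemma col_dominant_schur : col_dominant (block_mx a%:M u v D) -> 0 < a ->
  col_dominant (D - a^-1 *: (v *m u)).
Proof.
move=> /col_dominant_block[hv hu] a_gt0 j.
set S := D - _; pose c := a^-1 * `|u 0 j|.
have c_ge0 : 0 <= c by rewrite mulr_ge0 // invr_ge0 ltW.
have S_entry i : S i j = D i j - a^-1 * (v i 0 * u 0 j).
  by rewrite !mxE big_ord1.
have S_norm i : `|a^-1 * (v i 0 * u 0 j)| = c * `|v i 0|.
  by rewrite !normrM gtr0_norm ?invr_gt0 // mulrA mulrAC.
have off_diag : \sum_(i | i != j) `|S i j| <=
    \sum_(i | i != j) `|D i j| + c * \sum_(i | i != j) `|v i 0|.
  rewrite mulr_sumr -big_split /=; apply: ler_sum => i _.
  by rewrite S_entry -S_norm ler_normB.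
have diag : D j j - c * `|v j 0| <= S j j.
  by rewrite S_entry lerD2l lerN2 -S_norm ler_norm.
have col0 : c * `|v j 0| + c * \sum_(i | i != j) `|v i 0| <= `|u 0 j|.
  rewrite -mulrDr; rewrite (bigD1 j) //= in hv.
  apply: le_trans (ler_wpM2l c_ge0 hv) _.
  by rewrite /c mulrAC mulVf ?mul1r // gt_eqF.
have := hu j; lra.
Qed.

End Block.

Lemma det_ge0_col_dominant n (M : 'M[F]_n) : col_dominant M -> 0 <= \det M.
Proof.
elim: n M => [|n IHn] M; first by rewrite det_mx00.
change (col_dominant (M : 'M_(1 + n)) -> 0 <= \det (M : 'M_(1 + n))).
rewrite -(submxK (M : 'M_(1 + n))) [ulsubmx _]mx11_scalar.
set a := ulsubmx _ 0 0; set u := ursubmx _; set v := dlsubmx _; set D := drsubmx _.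
move=> dM; have [hv _] := col_dominant_block dM.
have [a0 | a_neq0] := eqVneq a 0.
  have v0 : v = 0.
    apply/matrixP => i k; rewrite ord1 [RHS]mxE; apply/eqP; rewrite -normr_eq0.
    rewrite eq_le normr_ge0 andbT -a0; apply: le_trans hv.
    by rewrite (bigD1 i) //= lerDl sumr_ge0.
  by rewrite v0 det_ublock det_scalar1 a0 mul0r.
have a_gt0 : 0 < a by rewrite lt0r a_neq0 (le_trans _ hv) ?sumr_ge0.
rewrite det_block_schur // mulr_ge0 ?(ltW a_gt0) //.
exact/IHn/col_dominant_schur.
Qed.

End ColumnDominance.

Lemma P0_col_dominant n (M : 'M[R]_n) : col_dominant M -> P0_matrix M.
Proof.
move=> dM S; apply/det_ge0_col_dominant/col_dominant_submx => //.
exact: enum_val_inj.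
Qed.

(* Indexing entries by [nat]s lets computation normalize the many different
   ordinal terms that denote the same index. *)
Section NatIndex.
Variables (T : Type) (n : nat).

Definition mx_nat (A : 'M[T]_n.+1) (i j : nat) := A (inord i) (inord j).

Lemma mx_natE (A : 'M[T]_n.+1) i j : A i j = mx_nat A i j.
Proof. by rewrite /mx_nat !inord_val. Qed.

End NatIndex.

Lemma det_mx22 (T : comNzRingType) (A : 'M[T]_2) :
  \det A = A 0 0 * A 1 1 - A 0 1 * A 1 0.
Proof.
rewrite (expand_det_row _ 0) !big_ord_recl big_ord0 /cofactor !det_mx11 !mxE.
by rewrite !(@mx_natE _ _ A) /bump /=; ring.
Qed.

Lemma det_mx33 (T : comNzRingType) (A : 'M[T]_3) :
  \det A = A 0 0 * (A 1 1 * A 2 2 - A 1 2 * A 2 1)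
         - A 0 1 * (A 1 0 * A 2 2 - A 1 2 * A 2 0)
         + A 0 2 * (A 1 0 * A 2 1 - A 1 1 * A 2 0).
Proof.
rewrite (expand_det_row _ 0) !big_ord_recl big_ord0 /cofactor !det_mx22 !mxE.
by rewrite !(@mx_natE _ _ A) /bump /=; ring.
Qed.

Definition principal_minor2_sum (T : comNzRingType) (M : 'M[T]_3) :=
  M 0 0 * M 1 1 - M 0 1 * M 1 0 + M 0 0 * M 2 2 - M 0 2 * M 2 0
  + M 1 1 * M 2 2 - M 1 2 * M 2 1.

Lemma char_poly_mx33 (T : comNzRingType) (M : 'M[T]_3) : char_poly M =
  'X^3 - \tr M *: 'X^2 + principal_minor2_sum M *: 'X - (\det M)%:P.
Proof.
rewrite -!mul_polyC /char_poly /char_poly_mx !det_mx33.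
rewrite /mxtrace !big_ord_recl big_ord0 !mxE.
rewrite /principal_minor2_sum !(@mx_natE _ _ M) /=.
by rewrite !(rmorphD, rmorphB, rmorphM, rmorphN) /= !(mulr1n, mulr0n) polyC0; ring.
Qed.

Definition compound2_mx3 (M : 'M[R]_3) : 'M[R]_3 :=
  \matrix_(i, j) nth 0 (nth [::]
    [:: [:: M 0 0 + M 1 1; M 1 2;         - M 0 2];
        [:: M 2 1;         M 0 0 + M 2 2; M 0 1];
        [:: - M 2 0;       M 1 0;         M 1 1 + M 2 2]] i) j.

(* (0,1), (0,2), (1,2) |-> 0, 1, 2 *)
Definition wedge3_index (w : wedge_idx 3) : 'I_3 :=
  inord ((val w).1 + (val w).2).-1.

Lemma wedge3_index_inj : injective wedge3_index.
Proof.
move=> [[k l] /= kl] [[i j] /= ij] /(congr1 val).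
have := ltn_ord l; have := ltn_ord j => jlt llt.
rewrite /wedge3_index /= !inordK => [E|*|*]; try lia.
by apply: val_inj; congr pair; apply: val_inj => /=; lia.
Qed.

Lemma compound2_entry3 (M : 'M[R]_3) r c :
  compound2_entry M r c = compound2_mx3 M (wedge3_index r) (wedge3_index c).
Proof.
case: r c => [[k l] /= kl] [[i j] /= ij].
rewrite /compound2_entry /wedge3_index mxE.
move: k l i j kl ij.
move=> [[|[|[|?]]] ?] [[|[|[|?]]] ?] [[|[|[|?]]] ?] [[|[|[|?]]] ?] //= _ _.
all: by rewrite !(@mx_natE _ _ M) /= !inordK //=; ring.
Qed.

Lemma compound2_mx3E (M : 'M[R]_3) : compound2 M =
  \matrix_(i, j)
    compound2_mx3 M (wedge3_index (enum_val i)) (wedge3_index (enum_val j)).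
Proof. by apply/matrixP => i j; rewrite [RHS]mxE /compound2 mxE compound2_entry3. Qed.

Lemma det_compound2_mx3 (M : 'M[R]_3) :
  \det (compound2_mx3 M) = principal_minor2_sum M * \tr M - \det M.
Proof.
rewrite !det_mx33 /principal_minor2_sum /mxtrace !big_ord_recl big_ord0 !mxE.
by rewrite !(@mx_natE _ _ M) /= !modn_small //=; ring.
Qed.

Lemma col_dominant_compound2_mx3 (M : 'M[R]_3) :
  col_entry_dominant M -> col_dominant (compound2_mx3 M).
Proof.
move=> dM j.
have dM' k l : `|mx_nat M k l| <= mx_nat M l l := dM (inord k) (inord l).
have M_ge0 k : 0 <= mx_nat M k k := le_trans (normr_ge0 _) (dM' k k).
rewrite big_mkcond !big_ord_recl big_ord0 /=.
case: j => [[|[|[|?]]] ?] //=; rewrite !mxE !(@mx_natE _ _ M) /= !modn_small // ?normrN.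
all: move: (dM' 0 1) (dM' 0 2) (dM' 1 0) (dM' 1 2) (dM' 2 0) (dM' 2 1).
all: move: (M_ge0 0) (M_ge0 1) (M_ge0 2); lra.
Qed.

Lemma P0_compound2 (M : 'M[R]_3) :
  col_entry_dominant M -> P0_matrix (compound2 M).
Proof.
move=> dM; rewrite compound2_mx3E; apply/P0_col_dominant/col_dominant_submx.
  by move=> i j /wedge3_index_inj /enum_val_inj.
exact: col_dominant_compound2_mx3.
Qed.

Lemma cubic_nonreal_root (t s d : R) (z : R[i]) :
  z ^+ 3 - t%:C * z ^+ 2 + s%:C * z - d%:C = 0 -> nonreal_in_open_LHP z ->
  s * t < d.
Proof.
case: z => a b /eqP; rewrite !exprS expr0 /= eq_complex /=.
move=> /andP[/eqP re /eqP im] /andP[/= b_neq0 a_lt0].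
have hs : s = b ^+ 2 + 2 * t * a - 3 * a ^+ 2.
  have : b * (s - (b ^+ 2 + 2 * t * a - 3 * a ^+ 2)) = 0 by rewrite -[RHS]im; ring.
  by move/eqP; rewrite mulf_eq0 (negPf b_neq0) subr_eq0 => /eqP.
have hd : d = a ^+ 3 - 3 * a * b ^+ 2 - t * (a ^+ 2 - b ^+ 2) + s * a by lra.
have E : s * t - d = 2 * a * (b ^+ 2 + (t - a) ^+ 2) by rewrite hd hs; ring.
have : 0 < b ^+ 2 + (t - a) ^+ 2 by rewrite ltr_wpDr ?sqr_ge0 // exprn_even_gt0.
nra.
Qed.

Lemma eigenvalueC_col_entry_dominant (M : 'M[R]_3) z :
  col_entry_dominant M -> eigenvalueC M z -> ~~ nonreal_in_open_LHP z.
Proof.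
move=> dM; rewrite /eigenvalueC -map_char_poly char_poly_mx33 => /rootP.
rewrite !(rmorphB, rmorphD) /= !map_polyZ !map_polyXn map_polyX map_polyC.
rewrite !(hornerD, hornerN, hornerZ, hornerXn) hornerX hornerC.
move=> root_z; apply/negP => /(cubic_nonreal_root root_z).
rewrite ltNge -subr_ge0 -det_compound2_mx3 det_ge0_col_dominant //.
exact: col_dominant_compound2_mx3.
Qed.

Lemma norm_mul_le_sign_compat (x y b : R) :
  x \in [:: 0; 1; -1] -> y \in [:: 0; 1; -1] -> Num.sg b \in [:: 0; Num.sg y] ->
  `|x * b| <= y * b.
Proof.
move=> hx hy hb.
have x_le1 : `|x| <= 1.
  by move: hx; rewrite !inE => /or3P[]/eqP->; rewrite ?normr0 ?normrN ?normr1.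
have -> : y * b = `|b|.
  move: hy hb; rewrite !inE => /or3P[]/eqP-> hb.
  - by move: hb; rewrite sgr0 orbb sgr_eq0 => /eqP->; rewrite mulr0 normr0.
  - by rewrite mul1r ger0_norm // -sgr_ge0; case/orP: hb => /eqP->; rewrite ?sgr1.
  - rewrite mulN1r ler0_norm // -sgr_le0.
    by case/orP: hb => /eqP->; rewrite ?sgrN1 // lerN10.
by rewrite normrM ler_piMl.
Qed.

Lemma col_entry_dominant_mul n m (A : 'M[R]_(n, m)) (B : 'M[R]_(m, n)) :
  entries_01m A -> in_Q0 A^T B -> col_entry_dominant (A *m B).
Proof.
move=> hA hB i j; rewrite !mxE.
apply: le_trans (ler_norm_sum _ _ _) _; apply: ler_sum => k _.
apply: norm_mul_le_sign_compat; [exact: hA | exact: hA |].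
by have := hB k j; rewrite mxE.
Qed.

Lemma entries_01m_tr n m (A : 'M[R]_(n, m)) : entries_01m A -> entries_01m A^T.
Proof. by move=> hA i j; rewrite mxE. Qed.

Lemma in_Q0_tr n m (M B : 'M[R]_(n, m)) : in_Q0 M B -> in_Q0 M^T B^T.
Proof. by move=> hB i j; rewrite !mxE. Qed.

Lemma eigenvalue_mulmxC (K : fieldType) m n
    (A : 'M[K]_(m, n)) (B : 'M[K]_(n, m)) z :
  z != 0 -> eigenvalue (A *m B) z -> eigenvalue (B *m A) z.
Proof.
move=> z_neq0 /eigenvalueP[v Hv v_neq0]; apply/eigenvalueP; exists (v *m A).
  by rewrite mulmxA -(mulmxA v) Hv scalemxAl.
apply: contraNneq v_neq0 => vA0.
have /eqP : z *: v = 0 by rewrite -Hv mulmxA vA0 mul0mx.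
by rewrite scaler_eq0 (negPf z_neq0).
Qed.

Lemma char_poly_trmx (T : comNzRingType) n (A : 'M[T]_n) :
  char_poly A^T = char_poly A.
Proof.
by rewrite /char_poly -det_tr /char_poly_mx linearB /= tr_scalar_mx map_trmx trmxK.
Qed.

Lemma eigenvalueC_tr n (M : 'M[R]_n) z : eigenvalueC M^T z = eigenvalueC M z.
Proof. by rewrite /eigenvalueC -map_trmx char_poly_trmx. Qed.

Lemma eigenvalueC_mulmxC m n (A : 'M[R]_(m, n)) (B : 'M[R]_(n, m)) z :
  z != 0 -> eigenvalueC (A *m B) z -> eigenvalueC (B *m A) z.
Proof.
by rewrite /eigenvalueC !map_mxM -!eigenvalue_root_char; exact: eigenvalue_mulmxC.
Qed.

Theorem proposition4p1 :
  (forall (m : nat) (A : 'M[R]_(3, m)) (B : 'M[R]_(m, 3)),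
     entries_01m A -> in_Q0 A^T B ->
     P0_matrix (compound2 (A *m B)) /\
     (forall z : R[i], eigenvalueC (A *m B) z -> ~~ nonreal_in_open_LHP z)) /\
  (forall (m : nat) (A : 'M[R]_(m, 3)) (B : 'M[R]_(3, m)),
     entries_01m A -> in_Q0 A^T B ->
     forall z : R[i], eigenvalueC (A *m B) z -> ~~ nonreal_in_open_LHP z).
Proof.
split=> m A B hA hB.
  have dAB := col_entry_dominant_mul hA hB.
  split=> [|z]; first exact: P0_compound2.
  exact: eigenvalueC_col_entry_dominant.
move=> z hz; have [-> | z_neq0] := eqVneq z 0.
  by rewrite /nonreal_in_open_LHP eqxx.
apply: (eigenvalueC_col_entry_dominant
          (col_entry_dominant_mul (entries_01m_tr hA) (in_Q0_tr hB))).
by rewrite -trmx_mul eigenvalueC_tr; exact: eigenvalueC_mulmxC hz.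
Qed.
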